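(* Let $D=\{d_1<d_2<d_3<\dotsb\}$ be an infinite set of positive integers. If there exist a real number $\delta>0$ and a positive integer $N$ such that $d_{n+1}\geq(3+\delta)d_n$ for all $n\geq N$, then $D$ is not $2$-accessible.
   Context: An $r$-coloring of a set $A$ is a function $\chi:A\to\{1,\dots,r\}$. For $D\subseteq\mathbb{N}=\{1,2,3,\dots\}$, a $k$-term $D$-diffsequence is a sequence of integers $x_1,\dots,x_k$ with $x_{i+1}-x_i\in D$ for all $1\le i\le k-1$. A set $D\subseteq\mathbb{N}$ is $r$-accessible if for every $r$-coloring of $\mathbb{N}$ and every $k\ge1$ there is a monochromatic $k$-term $D$-diffsequence in $\mathbb{N}$. *)

From Stdlib Require Import Reals Arith.

Definition is_diffseq (D : nat -> Prop) (k : nat) (x : nat -> nat) : Prop :=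
  (forall i, i < k -> 1 <= x i) /\
  (forall i, i + 1 < k -> exists d, D d /\ x (i + 1) = x i + d).

Definition is_coloring (r : nat) (chi : nat -> nat) : Prop :=
  forall n, 1 <= n -> 1 <= chi n <= r.

Definition monochromatic (chi : nat -> nat) (k : nat) (x : nat -> nat) : Prop :=
  forall i j, i < k -> j < k -> chi (x i) = chi (x j).

Definition accessible (r : nat) (D : nat -> Prop) : Prop :=
  forall chi, is_coloring r chi ->
  forall k, 1 <= k -> exists x, is_diffseq D k x /\ monochromatic chi k x.

(* Choose a real beta and an e > 0 such that beta * d lies, modulo 2, in the
   window [e, 1] for every d in D, and colour x by the parity of the integer
   part of beta * x.  Adding some d in D to x without changing the colour then
   raises the fractional part of beta * x by at least e, which can happen only
   finitely often.  Such a beta exists by nested intervals: if beta ranges over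
   an interval of length at least (3 - e) / d_n, then beta * d_n sweeps an
   interval of length 3 - e and so covers a whole window [2m + e, 2m + 1]; the
   corresponding subinterval has length (1 - e) / d_n, which is at least
   (3 - e) / d_(n+1) because d_(n+1) >= (3 + delta) d_n and e is small. *)

From Stdlib Require Import Reals Lra Lia ZArith.

Open Scope R_scope.

Definition in_parity_window (e y : R) : Prop :=
  exists m : Z, 2 * IZR m + e <= y <= 2 * IZR m + 1.

Lemma frac_part_add_parity_window (y t e : R) :
  0 < e -> in_parity_window e t ->
  Z.even (Int_part (y + t)) = Z.even (Int_part y) ->
  frac_part (y + t) >= frac_part y + e.
Proof.
  intros He [m Ht] Heven.
  pose proof (Rplus_Int_part_frac_part y) as Hy.
  pose proof (base_fp y) as Hf.
  set (z := Int_part y) in *; set (f := frac_part y) in *.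
  destruct (Rlt_or_le (f + (t - 2 * IZR m)) 1) as [Hlt | Hge].
  - destruct (Int_part_frac_part_spec (y + t) (z + 2 * m)%Z
                (f + (t - 2 * IZR m))) as [_ <-]; [lra | | lra].
    rewrite plus_IZR, mult_IZR; simpl (IZR 2); lra.
  - (* the carry would make the integer part jump by the odd number 2m + 1 *)
    destruct (Int_part_frac_part_spec (y + t) (z + 2 * m + 1)%Z
                (f + (t - 2 * IZR m) - 1)) as [Hint _]; [lra | | ].
    + rewrite !plus_IZR, mult_IZR; simpl (IZR 2); lra.
    + rewrite <- Hint, !Z.even_add, Z.even_mul in Heven; simpl in Heven.
      destruct (Z.even z); discriminate.
Qed.

Definition parity_coloring (beta : R) (x : nat) : nat :=
  if Z.even (Int_part (beta * INR x)) then 1%nat else 2%nat.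

Lemma parity_coloring_is_coloring (beta : R) :
  is_coloring 2 (parity_coloring beta).
Proof. intros n _; unfold parity_coloring; destruct Z.even; lia. Qed.

Lemma parity_coloring_eq (beta : R) (x y : nat) :
  parity_coloring beta x = parity_coloring beta y ->
  Z.even (Int_part (beta * INR x)) = Z.even (Int_part (beta * INR y)).
Proof.
  unfold parity_coloring.
  destruct (Z.even (Int_part (beta * INR x))), (Z.even (Int_part (beta * INR y)));
    congruence.
Qed.

Section ParityColoring.

Variables (D : nat -> Prop) (beta e : R).
Hypothesis He : 0 < e.
Hypothesis HD : forall d, D d -> in_parity_window e (beta * INR d).

Lemma frac_part_monochromatic_diffseq (k : nat) (x : nat -> nat) :
  is_diffseq D k x -> monochromatic (parity_coloring beta) k x ->
  forall i, (i < k)%nat -> frac_part (beta * INR (x i)) >= INR i * e.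
Proof.
  intros [_ Hstep] Hmono.
  induction i as [| i IHi]; intros Hi.
  - rewrite Rmult_0_l; apply base_fp.
  - destruct (Hstep i ltac:(lia)) as [d [Hd Hx]].
    rewrite Nat.add_1_r in Hx.
    assert (Hsum : beta * INR (x (S i)) = beta * INR (x i) + beta * INR d)
      by (rewrite Hx, plus_INR; ring).
    pose proof (parity_coloring_eq beta _ _ (Hmono (S i) i Hi ltac:(lia))) as Heven.
    rewrite Hsum in Heven |- *.
    pose proof (frac_part_add_parity_window _ _ _ He (HD d Hd) Heven).
    specialize (IHi ltac:(lia)); rewrite S_INR; lra.
Qed.

Lemma not_accessible_of_parity_window : ~ accessible 2 D.
Proof.
  intros Hacc.
  destruct (archimed_cor1 e He) as [K [HK HK0]].
  destruct (Hacc (parity_coloring beta) (parity_coloring_is_coloring beta)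
              (S K) ltac:(lia)) as [x [Hx Hmono]].
  pose proof (frac_part_monochromatic_diffseq _ _ Hx Hmono K ltac:(lia)) as Hfrac.
  pose proof (base_fp (beta * INR (x K))) as [_ Hlt1].
  assert (HKpos : 0 < INR K) by (apply lt_0_INR; lia).
  assert (1 < INR K * e).
  { replace 1 with (INR K * / INR K) by (field; lra).
    apply Rmult_lt_compat_l; lra. }
  lra.
Qed.

End ParityColoring.

Lemma nested_intervals_point (a b : nat -> R) :
  (forall j, a j <= a (S j)) -> (forall j, b (S j) <= b j) ->
  (forall j, a j <= b j) ->
  exists beta, forall j, a j <= beta <= b j.
Proof.
  intros Ha Hb Hab.
  assert (Ha_mono : forall i j, (i <= j)%nat -> a i <= a j).
  { intros i j Hij; induction Hij; [lra | specialize (Ha m); lra]. }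
  assert (Hb_mono : forall i j, (i <= j)%nat -> b j <= b i).
  { intros i j Hij; induction Hij; [lra | specialize (Hb m); lra]. }
  assert (Hle : forall i j, a i <= b j).
  { intros i j; destruct (Nat.le_ge_cases i j) as [Hij | Hji].
    - specialize (Ha_mono i j Hij); specialize (Hab j); lra.
    - specialize (Hb_mono j i Hji); specialize (Hab i); lra. }
  destruct (completeness (fun y => exists i, y = a i)) as [beta [Hub Hlub]].
  - exists (b 0%nat); intros y [i ->]; apply Hle.
  - exists (a 0%nat), 0%nat; reflexivity.
  - exists beta; intros j; split.
    + apply Hub; exists j; reflexivity.
    + apply Hlub; intros y [i ->]; apply Hle.
Qed.

Section ParityWindowPoint.

Variables (D : nat -> R) (q e a0 b0 : R).
Hypothesis HD : forall j, 0 < D j.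
Hypothesis HDgrowth : forall j, D (S j) >= q * D j.
Hypothesis He : e <= 1.
Hypothesis Hq : (1 - e) * q >= 3 - e.
Hypothesis Hinit : (b0 - a0) * D 0%nat >= 3 - e.

(* the index of the first window [2m + e, 2m + 1] to the right of a * Dj *)
Definition window_index (a Dj : R) : Z := up ((a * Dj - e) / 2).

Lemma window_index_spec (a b Dj : R) :
  0 < Dj -> (b - a) * Dj >= 3 - e ->
  a <= (2 * IZR (window_index a Dj) + e) / Dj /\
  (2 * IZR (window_index a Dj) + 1) / Dj <= b.
Proof.
  intros HDj Hlen; unfold window_index.
  destruct (archimed ((a * Dj - e) / 2)) as [Hup1 Hup2].
  set (m := IZR (up ((a * Dj - e) / 2))) in *.
  split; apply (Rmult_le_reg_r Dj); auto; unfold Rdiv;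
    rewrite ?Rmult_assoc, ?Rinv_l by lra; lra.
Qed.

Fixpoint window_lo (j : nat) : R :=
  match j with
  | O => a0
  | S j => (2 * IZR (window_index (window_lo j) (D j)) + e) / D j
  end.

Definition window_hi (j : nat) : R :=
  match j with
  | O => b0
  | S j => (2 * IZR (window_index (window_lo j) (D j)) + 1) / D j
  end.

Lemma window_length (j : nat) : (window_hi j - window_lo j) * D j >= 3 - e.
Proof.
  destruct j as [| j]; [exact Hinit |].
  assert (Hlen : window_hi (S j) - window_lo (S j) = (1 - e) / D j)
    by (simpl; field; specialize (HD j); lra).
  rewrite Hlen.
  specialize (HD j); specialize (HDgrowth j).
  assert (Hu : 0 <= (1 - e) / D j)
    by (apply Rmult_le_pos; [lra | apply Rlt_le, Rinv_0_lt_compat; lra]).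
  apply Rle_ge, Rle_trans with ((1 - e) / D j * (q * D j)).
  - replace ((1 - e) / D j * (q * D j)) with ((1 - e) * q) by (field; lra); lra.
  - apply Rmult_le_compat_l; lra.
Qed.

Lemma window_lo_le_hi (j : nat) : window_lo j <= window_hi j.
Proof.
  pose proof (window_length j) as Hlen; specialize (HD j).
  destruct (Rle_or_lt (window_lo j) (window_hi j)) as [Hle | Hgt]; [exact Hle |].
  assert ((window_hi j - window_lo j) * D j < 0) by (apply Rmult_neg_pos; lra).
  lra.
Qed.

Lemma exists_parity_window_point :
  exists beta, a0 <= beta <= b0 /\
    forall j, in_parity_window e (beta * D j).
Proof.
  destruct (nested_intervals_point window_lo window_hi) as [beta Hbeta].
  - intros j; apply (window_index_spec _ _ _ (HD j) (window_length j)).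
  - intros j; apply (window_index_spec _ _ _ (HD j) (window_length j)).
  - exact window_lo_le_hi.
  - exists beta; split; [exact (Hbeta 0%nat) |].
    intros j; exists (window_index (window_lo j) (D j)).
    specialize (Hbeta (S j)); simpl in Hbeta; specialize (HD j).
    set (m := IZR (window_index (window_lo j) (D j))) in *.
    replace (2 * m + e) with ((2 * m + e) / D j * D j) by (field; lra).
    replace (2 * m + 1) with ((2 * m + 1) / D j * D j) by (field; lra).
    split; apply Rmult_le_compat_r; lra.
Qed.

End ParityWindowPoint.

Lemma in_parity_window_between (e beta lo hi x : R) :
  0 <= e -> 0 < lo -> lo <= x <= hi -> e / lo <= beta <= 1 / hi ->
  in_parity_window e (beta * x).
Proof.
  intros He Hlo [Hx1 Hx2] [Hb1 Hb2]; exists 0%Z; simpl (IZR 0).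
  assert (Hbeta : 0 <= beta).
  { apply Rle_trans with (e / lo); [apply Rmult_le_pos; auto with real | lra]. }
  split.
  - apply Rle_trans with (e / lo * x); [| apply Rmult_le_compat_r; lra].
    apply Rle_trans with (e / lo * lo); [right; field; lra |].
    apply Rmult_le_compat_l; [apply Rmult_le_pos |]; auto with real.
  - apply Rle_trans with (beta * hi); [apply Rmult_le_compat_l; lra |].
    apply Rle_trans with (1 / hi * hi); [apply Rmult_le_compat_r; lra |].
    right; field; lra.
Qed.

Lemma nat_increasing_le (d : nat -> nat) :
  (forall n, (d n < d (S n))%nat) -> forall i j, (i <= j)%nat -> (d i <= d j)%nat.
Proof. intros Hinc i j Hij; induction Hij; [lia | specialize (Hinc m); lia]. Qed.

Lemma exists_parity_window_width (delta d0 dN : R) :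
  0 < delta -> 0 < d0 -> d0 <= dN ->
  exists e, 0 < e /\ e <= 1 /\ (1 - e) * (3 + delta) >= 3 - e /\
    e / d0 <= 1 / dN /\ (1 / dN - e / d0) * ((3 + delta) * dN) >= 3 - e.
Proof.
  intros Hdelta H0 H0N.
  set (e := delta * d0 / ((3 + delta) * (2 + delta) * dN)).
  assert (He0 : 0 < e) by (unfold e; apply Rdiv_lt_0_compat; nra).
  assert (He_dN : e * ((3 + delta) * (2 + delta) * dN) = delta * d0)
    by (unfold e; field; nra).
  assert (He_prod : e * (3 + delta) * (2 + delta) <= delta).
  { apply (Rmult_le_reg_r dN); nra. }
  assert (He_init : e * (3 + delta) * dN / d0 <= delta).
  { apply (Rmult_le_reg_r d0); [lra |]; field_simplify; nra. }
  assert (Hgap : (1 / dN - e / d0) * ((3 + delta) * dN) >= 3 - e).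
  { replace ((1 / dN - e / d0) * ((3 + delta) * dN))
      with ((3 + delta) - e * (3 + delta) * dN / d0) by (field; lra).
    lra. }
  assert (Hdiff : 0 < 1 / dN - e / d0).
  { apply (Rmult_lt_reg_r ((3 + delta) * dN)); nra. }
  exists e; repeat split; nra.
Qed.

Lemma exists_parity_window_beta (d : nat -> nat) (delta : R) (N : nat) :
  (1 <= d 0)%nat -> (forall n, (d n < d (S n))%nat) -> 0 < delta ->
  (forall n, (N <= n)%nat -> INR (d (S n)) >= (3 + delta) * INR (d n)) ->
  exists e beta, 0 < e /\ forall n, in_parity_window e (beta * INR (d n)).
Proof.
  intros Hpos Hinc Hdelta Hgrowth.
  assert (Hd : forall n, 0 < INR (d n)).
  { intros n; apply lt_0_INR; pose proof (nat_increasing_le d Hinc 0 n); lia. }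
  assert (Hd_le : forall i j, (i <= j)%nat -> INR (d i) <= INR (d j))
    by (intros i j Hij; apply le_INR, nat_increasing_le; assumption).
  destruct (exists_parity_window_width delta (INR (d 0%nat)) (INR (d N)) Hdelta
              (Hd 0%nat) (Hd_le 0%nat N (Nat.le_0_l N)))
    as [e [He0 [He1 [Hq [Hinit Hgap]]]]].
  destruct (exists_parity_window_point (fun j => INR (d (S N + j)%nat)) (3 + delta) e
              (e / INR (d 0%nat)) (1 / INR (d N))) as [beta [Hbeta Hwin]]; auto.
  - intros j; rewrite Nat.add_succ_r; apply Hgrowth; lia.
  - rewrite Nat.add_0_r; pose proof (Hgrowth N (le_n N)).
    apply Rle_ge, Rle_trans with
      ((1 / INR (d N) - e / INR (d 0%nat)) * ((3 + delta) * INR (d N))); [lra |].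
    apply Rmult_le_compat_l; lra.
  - exists e, beta; split; [exact He0 |]; intros n.
    destruct (Nat.le_gt_cases n N) as [Hn | Hn].
    + apply in_parity_window_between with (INR (d 0%nat)) (INR (d N)); auto; try lra.
      split; apply Hd_le; lia.
    + replace n with (S N + (n - S N))%nat by lia; apply Hwin.
Qed.

Close Scope R_scope.

Theorem mainTheorem2 (d : nat -> nat)
  (Hpos : 1 <= d 0)
  (Hinc : forall n, d n < d (S n))
  (delta : R) (Hdelta : (0 < delta)%R) (N : nat)
  (Hgrowth : forall n, N <= n -> (INR (d (S n)) >= (3 + delta) * INR (d n))%R) :
  ~ accessible 2 (fun m => exists n, d n = m).
Proof.
  destruct (exists_parity_window_beta d delta N Hpos Hinc Hdelta Hgrowth)
    as [e [beta [He Hwin]]].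
  apply (not_accessible_of_parity_window _ beta e He).
  intros m [n <-]; apply Hwin.
Qed.
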